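(* Let $\mathcal{R}$ be a field and $(\mathcal{C}^{\bullet},\partial)$ a bigraded cochain complex of $\mathcal{R}$-vector spaces as in the context. Then there are vector space isomorphisms \[ B^{2}(\mathcal{C},\partial)\cong(B^{2}(\mathcal{C},\partial)\cap\mathcal{C}^{2,0})\oplus(\mathcal{B}^{2}_{1}\cap\mathcal{C}^{1,1})\oplus B^{2}(\mathcal{C}^{0,\bullet},\partial_{0,1}), \] \[ Z^{2}(\mathcal{C},\partial)\cong Z^{2}(\mathcal{N}_{0},\overline{\partial})\oplus\ker(\varrho_{2})\oplus\mathcal{Z}^{2}_{2}, \] \[ H^{2}(\mathcal{C},\partial)\cong\frac{Z^{2}(\mathcal{N}_{0},\overline{\partial})}{B^{2}(\mathcal{C},\partial)\cap\mathcal{C}^{2,0}}\oplus\frac{\ker(\varrho_{2})}{\mathcal{B}^{2}_{1}\cap\mathcal{C}^{1,1}}\oplus\frac{\mathcal{Z}^{2}_{2}}{B^{2}(\mathcal{C}^{0,\bullet},\partial_{0,1})}. \]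
   Context: Setting: $\mathcal{C}^{k}=\bigoplus_{p+q=k}\mathcal{C}^{p,q}$ with $\mathcal{C}^{p,q}=\{0\}$ if $p<0$ or $q<0$; $\partial$ is linear of degree $1$, $\partial^{2}=0$, $\partial=\partial_{2,-1}+\partial_{1,0}+\partial_{0,1}$ with $\partial_{i,j}(\mathcal{C}^{p,q})\subseteq\mathcal{C}^{p+i,q+j}$. For $\eta\in\mathcal{C}^k$, $\eta_{p,q}$ is its $\mathcal{C}^{p,q}$-component. $G^{q}\mathcal{C}:=\bigoplus_{j\geq q}\mathcal{C}^{i,j}$, $\pi_{q}:\mathcal{C}\to G^{q}\mathcal{C}$ the projection along the bigrading. $(\mathcal{C}^{0,\bullet},\partial_{0,1})$ is a cochain complex. $\mathcal{N}^{p,q}:=\ker(\partial_{0,1}|_{\mathcal{C}^{p,q}})\cap\ker(\partial_{2,-1}|_{\mathcal{C}^{p,q}})$, $\mathcal{N}_{q}:=\bigoplus_{p}\mathcal{N}^{p-q,q}$ (degree-$m$ part $\mathcal{N}^{m-q,q}$), a subcomplex with differential $\overline{\partial}:=\partial|_{\mathcal{N}_q}$. $\mathcal{M}^{k}:=\{\eta\in\mathcal{C}^{k}\mid(\partial\eta)_{i,j}\in B^{k+1}(\mathcal{N}_{j},\overline{\partial})\ \forall\, i+j=k+1\}$; $\mathcal{Z}^{k}_{q}:=\{\pi_{q}(\eta)\mid\eta\in\mathcal{M}^{k},\ \pi_{q}(\partial\eta)=0\}$; $\mathcal{B}^{k}_{q}:=\pi_{q}(B^{k}(\mathcal{C},\partial))$.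 $\mathcal{A}^{k}:=\{\pi_{1}(\eta)\mid\eta\in\mathcal{C}^{k},\ \pi_{1}(\partial\eta)=0\}$, $\mathcal{J}^{k}:=\mathcal{A}^{k}\cap\mathcal{C}^{k-1,1}$. For $\xi\in\mathcal{A}^{k}$ and any $\eta$ with $\pi_{1}\eta=\xi$, $\pi_{1}(\partial\eta)=0$, the class $[\partial_{2,-1}\xi_{k-1,1}+\partial_{1,0}\eta_{k,0}]\in H^{k+1}(\mathcal{N}_{0},\overline\partial)$ depends only on $\xi$, defining the linear map $\rho_{k}:\mathcal{A}^{k}\to H^{k+1}(\mathcal{N}_{0},\overline{\partial})$; $\varrho_{k}:=\rho_{k}|_{\mathcal{J}^{k}}$. *)

From HB Require Import structures.
From mathcomp Require Import all_boot all_order all_algebra.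
Set Implicit Arguments. Unset Strict Implicit. Unset Printing Implicit Defensive.
Import GRing.Theory.
Local Open Scope ring_scope.

(* C k (= bC k) is the total space C^k.  The bigrading C^k = (+)_{p+q=k} C^{p,q}
   is given as an internal direct sum by the projections bpr k p : C^k -> C^k onto
   C^{p,k-p} (zero for p > k, i.e. when q < 0). *)
Record bicomplex (R : fieldType) := Bicomplex {
  bC : nat -> lmodType R;
  bpr : forall k : nat, nat -> {linear bC k -> bC k};
  bd21 : forall k : nat, {linear bC k -> bC k.+1};
  bd10 : forall k : nat, {linear bC k -> bC k.+1};
  bd01 : forall k : nat, {linear bC k -> bC k.+1};
  bpr_out : forall k p (x : bC k), (k < p)%N -> bpr k p x = 0;
  bpr_orth : forall k p p' (x : bC k),
      bpr k p (bpr k p' x) = if p == p' then bpr k p' x else 0;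
  bpr_sum : forall k (x : bC k), \sum_(p < k.+1) bpr k p x = x;
  bd21_deg : forall k p (x : bC k),
      bpr k.+1 p.+2 (bd21 k (bpr k p x)) = bd21 k (bpr k p x);
  bd10_deg : forall k p (x : bC k),
      bpr k.+1 p.+1 (bd10 k (bpr k p x)) = bd10 k (bpr k p x);
  bd01_deg : forall k p (x : bC k),
      bpr k.+1 p (bd01 k (bpr k p x)) = bd01 k (bpr k p x);
  bdd : forall k (x : bC k),
      let d := fun m (y : bC m) => bd21 m y + bd10 m y + bd01 m y in
      d k.+1 (d k x) = 0
}.

Section Defs.
Variables (R : fieldType) (X : bicomplex R).
Local Notation C := (bC X).
Local Notation pr := (bpr X).

Definition dtot k (x : C k) : C k.+1 := bd21 X k x + bd10 X k x + bd01 X k x.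

(* x lies in C^{p,k-p} *)
Definition inC k p (x : C k) : Prop := pr k p x = x.

Definition Zc k (x : C k) : Prop := dtot x = 0.
Definition Bc k (x : C k.+1) : Prop := exists y : C k, dtot y = x.

(* pi_q : C^k -> G^q C^k, keeping the components C^{p,k-p} with k - p >= q *)
Definition piq k q (x : C k) : C k := \sum_(p < k.+1 | (q + p <= k)%N) pr k p x.

Definition calB k q (x : C k.+1) : Prop := exists y : C k, x = piq q (dtot y).

Definition Nin k p (x : C k) : Prop :=
  [/\ inC p x, bd01 X k x = 0 & bd21 X k x = 0].
(* degree-m part of N_q, namely N^{m-q,q} (zero if q > m) *)
Definition NqIn q m (x : C m) : Prop :=
  if (q <= m)%N then Nin (m - q) x else x = 0.
Definition BN j k (x : C k.+1) : Prop := exists y : C k, NqIn j y /\ dtot y = x.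
Definition ZN0 k (x : C k) : Prop := NqIn 0 x /\ dtot x = 0.

Definition B0 k (x : C k.+1) : Prop := exists y : C k, inC 0 y /\ bd01 X k y = x.

Definition Min k (eta : C k) : Prop :=
  forall i : nat, (i <= k.+1)%N -> BN (k.+1 - i) (pr k.+1 i (dtot eta)).
Definition calZ k q (x : C k) : Prop :=
  exists eta : C k, [/\ Min eta, piq q (dtot eta) = 0 & x = piq q eta].
Definition calA k (x : C k) : Prop :=
  exists eta : C k, piq 1 (dtot eta) = 0 /\ x = piq 1 eta.
Definition calJ k (x : C k) : Prop := [/\ (1 <= k)%N, calA x & inC (k - 1) x].

(* representative d21 xi_{k-1,1} + d10 eta_{k,0} of rho_k(xi) in H^{k+1}(N_0) *)
Definition rho_rep k (xi eta : C k) : C k.+1 :=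
  bd21 X k (pr k (k - 1) xi) + bd10 X k (pr k k eta).
(* ker(varrho_k): xi in J^k whose class rho_k(xi) vanishes, i.e. the
   representative (computed from any admissible eta) lies in B^{k+1}(N_0) *)
Definition ker_rho k (xi : C k) : Prop :=
  calJ xi /\ exists eta : C k,
    [/\ piq 1 eta = xi, piq 1 (dtot eta) = 0 & BN 0 (rho_rep xi eta)].

End Defs.

Definition zerop (R : fieldType) (V : lmodType R) (x : V) : Prop := x = 0.

Definition lin_on (R : fieldType) (V W : lmodType R) (Z : V -> Prop) (f : V -> W) :=
  forall (a : R) (x y : V), Z x -> Z y -> f (a *: x + y) = a *: f x + f y.

(* Vector space isomorphism  Z/B  ~=  Z1/B1 (+) Z2/B2 (+) Z3/B3  for subquotients
   (Z, B subspaces, B inside Z) of ambient spaces V, V1, V2, V3: there are maps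
   f_i, linear on Z, sending Z into Z_i and B into B_i, such that the induced
   linear map Z/B -> (+)_i Z_i/B_i is injective and surjective. Subspaces are
   the subquotients with B = zerop. *)
Definition subq_iso3 (R : fieldType) (V : lmodType R) (Z B : V -> Prop)
    (V1 V2 V3 : lmodType R) (Z1 B1 : V1 -> Prop) (Z2 B2 : V2 -> Prop)
    (Z3 B3 : V3 -> Prop) : Prop :=
  exists (f1 : V -> V1) (f2 : V -> V2) (f3 : V -> V3),
    [/\ lin_on Z f1 /\ lin_on Z f2 /\ lin_on Z f3,
        (forall z, Z z -> [/\ Z1 (f1 z), Z2 (f2 z) & Z3 (f3 z)]),
        (forall b, B b -> [/\ B1 (f1 b), B2 (f2 b) & B3 (f3 b)]),
        (forall z, Z z -> B1 (f1 z) -> B2 (f2 z) -> B3 (f3 z) -> B z) &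
        (forall z1 z2 z3, Z1 z1 -> Z2 z2 -> Z3 z3 ->
           exists z, [/\ Z z, B1 (f1 z - z1), B2 (f2 z - z2) & B3 (f3 z - z3)])].

(* Cut C^2 into columns.  A cocycle z is first read through its C^{0,2}-component,
   then, once that component vanishes, through its C^{1,1}-component, and what is left
   lies in C^{2,0}.  At each stage the component map sends cocycles onto Z^2_2,
   ker varrho_2 and Z^2(N_0) respectively, and coboundaries onto the corresponding
   boundary spaces: a lift is corrected by the N-coboundaries supplied by the
   definitions of M^2 and of varrho_2.  Linear retractions onto the successive kernels,
   which exist by Zorn's lemma since the spaces have arbitrary dimension, turn this
   three-step filtration of Z^2 (and of B^2) into the stated direct sums. *)

From HB Require Import structures.
From mathcomp Require Import all_boot all_order all_algebra.
From mathcomp Require Import classical_sets.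
From Stdlib Require Import Classical ClassicalEpsilon.

Set Implicit Arguments. Unset Strict Implicit. Unset Printing Implicit Defensive.
Import GRing.Theory.
Local Open Scope ring_scope.

Definition maps_onto (T T' : Type) (Z : T -> Prop) (Z' : T' -> Prop)
    (g : T -> T') :=
  (forall z, Z z -> Z' (g z)) /\ (forall z', Z' z' -> exists2 z, Z z & g z = z').

Section Subspaces.
Variables (R : fieldType) (V : lmodType R).

Definition is_subspace (S : V -> Prop) :=
  S 0 /\ forall a x y, S x -> S y -> S (a *: x + y).

Lemma subspaceD S x y : is_subspace S -> S x -> S y -> S (x + y).
Proof. by case=> _ Scomb Sx Sy; have := Scomb 1 x y Sx Sy; rewrite scale1r. Qed.

Lemma subspaceZ S a x : is_subspace S -> S x -> S (a *: x).
Proof. by case=> S0 Scomb Sx; have := Scomb a x 0 Sx S0; rewrite addr0. Qed.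

Lemma subspaceB S x y : is_subspace S -> S x -> S y -> S (x - y).
Proof.
by move=> subS Sx Sy; rewrite -scaleN1r; apply: subspaceD => //; apply: subspaceZ.
Qed.

Lemma subspaceI S S' :
  is_subspace S -> is_subspace S' -> is_subspace (fun x => S x /\ S' x).
Proof.
case=> S0 Scomb [S'0 S'comb]; split=> // a x y [Sx S'x] [Sy S'y].
by split; [apply: Scomb | apply: S'comb].
Qed.

Lemma subspace_ker (V' : lmodType R) (g : {linear V -> V'}) :
  is_subspace (fun x => g x = 0).
Proof. by split=> [|a x y gx gy]; rewrite ?linearP ?gx ?gy ?scaler0 ?addr0 ?linear0. Qed.

Section Complement.
Variables U S L0 : V -> Prop.
Hypotheses (subU : is_subspace U) (subS : is_subspace S) (subL0 : is_subspace L0).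
Hypotheses (L0S : forall x, L0 x -> S x) (L0U : forall x, L0 x -> U x -> x = 0).

Definition partial_complement (L : V -> Prop) :=
  [/\ is_subspace L, forall x, L0 x -> L x, forall x, L x -> S x &
      forall x, L x -> U x -> x = 0].

Lemma maximal_partial_complement : exists L, partial_complement L /\
  forall L', partial_complement L' -> (forall x, L x -> L' x) ->
    forall x, L' x -> L x.
Proof.
(* The empty union of a chain is not a subspace; hence the last clause. *)
pose P (A : set V) := [/\ forall x, A x -> S x, forall x, A x -> U x -> x = 0,
  forall a x y, A x -> A y -> A (a *: x + y) &
  (exists x, A x) -> forall x, L0 x -> A x].
have P_complement L : partial_complement L -> P L.
  by case=> -[L0' Lcomb] L0L LS LU; split=> // _ x /L0L.
have [|A [[AS AU Acomb AL0] Amax]] := @Zorn_bigcup V P.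
  move=> F FP Ftot; split.
  - by move=> x [Y FY Yx]; have [+ _ _ _] := FP Y FY; apply.
  - by move=> x [Y FY Yx]; have [_ + _ _] := FP Y FY; apply.
  - move=> a x y [Y FY Yx] [Y' FY' Y'y].
    have [YY'|Y'Y] := Ftot Y Y' FY FY'.
    + by exists Y' => //; have [_ _ + _] := FP Y' FY'; apply => //; apply: YY'.
    + by exists Y => //; have [_ _ + _] := FP Y FY; apply => //; apply: Y'Y.
  - move=> [x [Y FY Yx]] z L0z; exists Y => //.
    by have [_ _ _ +] := FP Y FY; apply => //; exists x.
have A_L0 : forall x, L0 x -> A x.
  apply: AL0; apply: NNPP => A0; apply: (Amax L0); last exact: P_complement.
  split=> [x Ax|L0A]; first by case: A0; exists x.
  by case: A0; exists 0; apply: L0A; case: subL0.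
have subA : is_subspace A.
  split=> //; have := Acomb (-1) 0 0 (A_L0 _ subL0.1) (A_L0 _ subL0.1).
  by rewrite scaleN1r addNr.
exists A; split=> // L' compL' AL' x L'x; apply: NNPP => Ax.
by apply: (Amax L'); [split=> // L'A; apply: Ax; apply: L'A | exact: P_complement].
Qed.

Lemma exists_complement : exists L, partial_complement L /\
  forall s, S s -> exists u l, [/\ U u, L l & s = u + l].
Proof.
have [A [[subA AL0 AS AU] Amax]] := maximal_partial_complement.
exists A; split=> // s Ss; apply: NNPP => s_notin.
pose A' v := exists a c, A a /\ v = a + c *: s.
have AA' x : A x -> A' x by move=> Ax; exists x, 0; rewrite scale0r addr0.
have compA' : partial_complement A'.
  split.
  - split; first by exists 0, 0; rewrite scale0r addr0; split=> //; case: subA.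
    move=> k _ _ [a [c [Aa ->]]] [b [e [Ab ->]]]; exists (k *: a + b), (k * c + e).
    by split; [case: subA => _; apply | rewrite scalerDr scalerA addrACA scalerDl].
  - by move=> x /AL0 /AA'.
  - by move=> _ [a [c [Aa ->]]]; apply: subspaceD => //; [apply: AS | apply: subspaceZ].
  - move=> _ [a [c [Aa ->]]] Uv; have [c0|c0] := eqVneq c 0.
      by move: Uv; rewrite c0 scale0r !addr0 => Ua; rewrite (AU _ Aa Ua).
    (* otherwise s = c^-1 (a + c s) - c^-1 a would lie in U + A *)
    case: s_notin; exists (c^-1 *: (a + c *: s)), (- (c^-1 *: a)); split.
    + exact: subspaceZ.
    + by rewrite -scaleN1r; apply: subspaceZ => //; apply: subspaceZ.
    + by rewrite scalerDr scalerA mulVf // scale1r addrAC subrr add0r.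
have A's : A' s by exists 0, 1; rewrite scale1r add0r; split=> //; case: subA.
have As := Amax A' compA' AA' s A's.
by case: s_notin; exists 0, s; split=> //; [case: subU | rewrite add0r].
Qed.

End Complement.

Lemma subspace0 : is_subspace (@zerop R V).
Proof. by split=> // a _ _ -> ->; rewrite scaler0 addr0. Qed.

Lemma maps_onto0 (V' : lmodType R) (A : V -> Prop) (A' : V' -> Prop)
    (g : {linear V -> V'}) :
  is_subspace A -> maps_onto A A' g -> A' 0.
Proof. by move=> [A0 _] [+ _] => /(_ 0 A0); rewrite linear0. Qed.

Lemma lin_onD (V' : lmodType R) (Z : V -> Prop) (f : V -> V') x y :
  lin_on Z f -> Z x -> Z y -> f (x + y) = f x + f y.
Proof. by move=> flin Zx Zy; have := flin 1 x y Zx Zy; rewrite !scale1r. Qed.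

Lemma lin_onB (V' : lmodType R) (Z : V -> Prop) (f : V -> V') x y :
  lin_on Z f -> Z x -> Z y -> f (x - y) = f x - f y.
Proof.
move=> flin Zx Zy; have := flin (-1) y x Zy Zx.
by rewrite !scaleN1r addrC => ->; rewrite addrC.
Qed.

Lemma lin_on_comp (V' V'' : lmodType R) (Z : V -> Prop) (K : V' -> Prop)
    (f : V -> V') (h : V' -> V'') :
  lin_on Z f -> (forall z, Z z -> K (f z)) -> lin_on K h -> lin_on Z (h \o f).
Proof. by move=> flin fK hlin a x y Zx Zy /=; rewrite flin // hlin //; apply: fK. Qed.

Lemma linear_lin_on (V' : lmodType R) (Z : V -> Prop) (g : {linear V -> V'}) :
  lin_on Z g.
Proof. by move=> a x y _ _; rewrite linearP. Qed.

Lemma exists_projection (W U B : V -> Prop) :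
  is_subspace W -> is_subspace U -> is_subspace B ->
  (forall x, U x -> W x) -> (forall x, B x -> W x) ->
  exists P : V -> V, [/\ lin_on W P, forall w, W w -> U (P w),
     forall u, U u -> P u = u & forall b, B b -> B (P b)].
Proof.
move=> subW subU subB UW BW.
(* Complementing U first inside B makes the projection along the complement preserve B. *)
have zeroB x : zerop x -> B x by move->; case: subB.
have [L1 [[subL1 _ L1B L1U] decB]] :=
  exists_complement subU subB subspace0 zeroB (fun _ x0 _ => x0).
have [L [[subL L1L LW LU] decW]] :=
  exists_complement subU subW subL1 (fun x L1x => BW x (L1B x L1x)) L1U.
pose split_at w u := U u /\ L (w - u).
have split_uniq w u u' : split_at w u -> split_at w u' -> u = u'.
  move=> [Uu Lu] [Uu' Lu']; apply/eqP; rewrite -subr_eq0; apply/eqP.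
  apply: LU; last exact: subspaceB.
  have -> : u - u' = (w - u') - (w - u) by rewrite opprB [RHS]addrC addrA subrK.
  exact: subspaceB.
have split_ex w : W w -> exists u, split_at w u.
  by move=> /decW [u [l [Uu Ll ->]]]; exists u; split; rewrite // addrC addKr.
pose P w := epsilon (inhabits 0) (split_at w).
have PP w : W w -> split_at w (P w) := fun Ww => epsilon_spec _ _ (split_ex w Ww).
exists P; split.
- move=> a x y Wx Wy; apply: (split_uniq (a *: x + y)).
    by apply: PP; case: subW => _; apply.
  have [[Ux Lx] [Uy Ly]] := (PP x Wx, PP y Wy).
  split; first by case: subU => _; apply.
  rewrite (_ : _ - _ = a *: (x - P x) + (y - P y)); last first.
    by rewrite scalerDr scalerN opprD addrACA.
  by case: subL => _; apply.
- by move=> w /PP [].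
- move=> u Uu; apply: (split_uniq u); first exact/PP/UW.
  by split; rewrite // subrr; case: subL.
- move=> b Bb; have [u [l [Uu L1l bE]]] := decB b Bb.
  have -> : P b = u.
    apply: (split_uniq b); first exact/PP/BW.
    by split; rewrite // bE addrC addKr; apply: L1L.
  have -> : u = b - l by rewrite bE addrK.
  by apply: subspaceB => //; apply: L1B.
Qed.

(* P retracts Z onto K = Z \cap ker g; together with g it identifies Z/B with
   Z'/B' (+) K/(B \cap K). *)
Lemma exists_kernel_retraction (V' : lmodType R) (Z B : V -> Prop)
    (Z' B' : V' -> Prop) (g : {linear V -> V'}) :
  is_subspace Z -> is_subspace B -> (forall b, B b -> Z b) ->
  maps_onto Z Z' g -> maps_onto B B' g ->
  exists P : V -> V, [/\ lin_on Z P,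
    forall z, Z z -> Z (P z) /\ g (P z) = 0,
    forall b, B b -> B (P b),
    forall z, Z z -> B' (g z) -> B (P z) -> B z &
    forall z' k, Z' z' -> Z k -> g k = 0 ->
      exists2 z, Z z & g z = z' /\ P z = k].
Proof.
move=> subZ subB BZ [_ ontoZ] [_ ontoB].
have subK := subspaceI subZ (subspace_ker g).
have [P [Plin PK Pid PB]] :=
  exists_projection subZ subK subB (fun x (Kx : Z x /\ g x = 0) => Kx.1) BZ.
exists P; split=> //.
- move=> z Zz /ontoB [b Bb gb] BPz.
  have Kzb : Z (z - b) /\ g (z - b) = 0.
    by split; [apply: subspaceB => //; apply: BZ | rewrite linearB gb subrr].
  have Zb := BZ b Bb.
  rewrite -(subrK b z) -(Pid _ Kzb) (lin_onB Plin) //.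
  by apply: subspaceD => //; apply: subspaceB => //; apply: PB.
- move=> _ k /ontoZ [a Za <-] Zk gk.
  have [ZPa gPa] := PK a Za.
  have ZaPa : Z (a - P a) by apply: subspaceB.
  exists (a - P a + k); first exact: subspaceD.
  split; first by rewrite !linearD linearN gPa gk subr0 addr0.
  by rewrite (lin_onD Plin) // (lin_onB Plin) // (Pid (P a)) // (Pid k) // subrr add0r.
Qed.

Lemma subq_iso3_of_filtration (V1 V2 V3 : lmodType R) (Z B : V -> Prop)
    (Z1 B1 : V1 -> Prop) (Z2 B2 : V2 -> Prop) (Z3 B3 : V3 -> Prop)
    (g1 : {linear V -> V1}) (g2 : {linear V -> V2}) (g3 : {linear V -> V3}) :
  is_subspace Z -> is_subspace B -> (forall b, B b -> Z b) ->
  maps_onto Z Z3 g3 -> maps_onto B B3 g3 ->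
  maps_onto (fun z => Z z /\ g3 z = 0) Z2 g2 ->
  maps_onto (fun b => B b /\ g3 b = 0) B2 g2 ->
  maps_onto (fun z => (Z z /\ g3 z = 0) /\ g2 z = 0) Z1 g1 ->
  maps_onto (fun b => (B b /\ g3 b = 0) /\ g2 b = 0) B1 g1 ->
  (forall z, (Z z /\ g3 z = 0) /\ g2 z = 0 -> g1 z = 0 -> B z) ->
  subq_iso3 Z B Z1 B1 Z2 B2 Z3 B3.
Proof.
move=> subZ subB BZ onto3 onto3B onto2 onto2B onto1 onto1B ker1.
have subK3 := subspaceI subZ (subspace_ker g3).
have subBK3 := subspaceI subB (subspace_ker g3).
have subBK2 := subspaceI subBK3 (subspace_ker g2).
have [P [Plin PK PB Pinj Psurj]] := exists_kernel_retraction subZ subB BZ onto3 onto3B.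
have [P' [P'lin P'K P'B P'inj P'surj]] := exists_kernel_retraction subK3 subBK3
  (fun b (Bb : B b /\ g3 b = 0) => conj (BZ b Bb.1) Bb.2) onto2 onto2B.
exists (g1 \o P' \o P), (g2 \o P), g3; split.
- split; last split; last exact: linear_lin_on.
    apply: (lin_on_comp (K := fun x => Z x /\ g3 x = 0)) => //.
    apply: (lin_on_comp (K := fun x => (Z x /\ g3 x = 0) /\ g2 x = 0)) => //.
    exact: linear_lin_on.
  by apply: (lin_on_comp (K := fun x => Z x /\ g3 x = 0)) => //; apply: linear_lin_on.
- move=> z Zz; have KPz := PK z Zz.
  by split; [apply: onto1.1; apply: P'K | apply: onto2.1 | apply: onto3.1].
- move=> b Bb; have [BPb [_ gPb]] := (PB b Bb, PK b (BZ b Bb)).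
  have [[BP'Pb g3P'Pb] [_ g2P'Pb]] := (P'B _ (conj BPb gPb), P'K _ (PK b (BZ b Bb))).
  by split; [apply: onto1B.1 | apply: onto2B.1 | apply: onto3B.1].
- move=> z Zz /= B1z B2z B3z; have KPz := PK z Zz; have K2P'Pz := P'K _ KPz.
  have [b [[Bb g3b] g2b] g1b] := onto1B.2 _ B1z.
  have BP'Pz : B (P' (P z)).
    rewrite -(subrK b (P' (P z))); apply: subspaceD => //; apply: ker1.
      split; last by rewrite linearB g2b K2P'Pz.2 subrr.
      by apply: (subspaceB subK3); [exact: K2P'Pz.1 | split; first exact: BZ].
    by rewrite linearB g1b subrr.
  by apply: Pinj => //; apply: (P'inj _ KPz B2z (conj BP'Pz (K2P'Pz.1).2)).1.
- move=> z1 z2 z3 /onto1.2 [k2 K2k2 <-] /P'surj /(_ K2k2.1 K2k2.2) [k3 K3k3 [<- P'k3]].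
  move=> /Psurj /(_ K3k3.1 K3k3.2) [z Zz [<- Pz]]; exists z; split=> //=.
  all: rewrite ?Pz ?P'k3 subrr.
  - exact: maps_onto0 subBK2 onto1B.
  - exact: maps_onto0 subBK3 onto2B.
  - exact: maps_onto0 subB onto3B.
Qed.

Lemma subspace_iso3_of_filtration (V1 V2 V3 : lmodType R) (Z : V -> Prop)
    (Z1 : V1 -> Prop) (Z2 : V2 -> Prop) (Z3 : V3 -> Prop)
    (g1 : {linear V -> V1}) (g2 : {linear V -> V2}) (g3 : {linear V -> V3}) :
  is_subspace Z -> maps_onto Z Z3 g3 ->
  maps_onto (fun z => Z z /\ g3 z = 0) Z2 g2 ->
  maps_onto (fun z => (Z z /\ g3 z = 0) /\ g2 z = 0) Z1 g1 ->
  (forall z, (Z z /\ g3 z = 0) /\ g2 z = 0 -> g1 z = 0 -> z = 0) ->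
  subq_iso3 Z (@zerop R V) Z1 (@zerop R V1) Z2 (@zerop R V2) Z3 (@zerop R V3).
Proof.
move=> subZ onto3 onto2 onto1 inj1.
have onto_zero (V' : lmodType R) (A : V -> Prop) (g : {linear V -> V'}) :
    A 0 -> (forall x, A x -> x = 0) -> maps_onto A (@zerop R V') g.
  move=> A0 A_0; split=> [_ /A_0 ->|_ ->]; first exact: linear0.
  by exists 0; rewrite ?linear0.
apply: (subq_iso3_of_filtration subZ subspace0 _ onto3 _ onto2 _ onto1) => //.
- by move=> _ ->; case: subZ.
- by apply: onto_zero => // x ->.
- by apply: onto_zero => [|x [->]]; rewrite ?linear0.
- by apply: onto_zero => [|x [[->]]]; rewrite ?linear0.
Qed.

End Subspaces.

Lemma sum_ord_if_eq (W : nmodType) n m (G : nat -> W) :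
  (forall p, (n < p)%N -> G p = 0) ->
  \sum_(p < n.+1) (if (p : nat) == m then G p else 0) = G m.
Proof.
move=> G0; rewrite -big_mkcond /=; have [mn|nm] := leqP m n.
  by rewrite (big_pred1 (Ordinal (mn : (m < n.+1)%N))) // => i; rewrite -val_eqE.
rewrite G0 // big_pred0 // => i; apply/eqP => im.
by move: (ltn_ord i); rewrite im ltnS leqNgt nm.
Qed.

Lemma dtot_is_linear (R : fieldType) (X : bicomplex R) k : linear (@dtot R X k).
Proof. by move=> a x y; exact: (linearP (bd21 X k \+ bd10 X k \+ bd01 X k)). Qed.
HB.instance Definition _ (R : fieldType) (X : bicomplex R) (k : nat) :=
  GRing.isLinear.Build R (bC X k) (bC X k.+1) *:%R (@dtot R X k)
    (@dtot_is_linear R X k).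

Lemma piq_is_linear (R : fieldType) (X : bicomplex R) k q : linear (@piq R X k q).
Proof.
move=> a x y; rewrite /piq scaler_sumr -big_split /=.
by apply: eq_bigr => p _; rewrite linearP.
Qed.
HB.instance Definition _ (R : fieldType) (X : bicomplex R) (k q : nat) :=
  GRing.isLinear.Build R (bC X k) (bC X k) *:%R (@piq R X k q)
    (@piq_is_linear R X k q).

Section Bicomplex.
Variables (R : fieldType) (X : bicomplex R).
Local Notation C := (bC X).
Local Notation pr := (bpr X).

Lemma pr_idem k p (x : C k) : pr k p (pr k p x) = pr k p x.
Proof. by rewrite bpr_orth eqxx. Qed.

Lemma inC_pr_neq k p p' (x : C k) : inC p' x -> p != p' -> pr k p x = 0.
Proof. by move=> <-; rewrite bpr_orth => /negbTE ->. Qed.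

Lemma pr_ext k (x y : C k) :
  (forall p, (p <= k)%N -> pr k p x = pr k p y) -> x = y.
Proof.
move=> xy; rewrite -(bpr_sum x) -(bpr_sum y).
by apply: eq_bigr => p _; apply: xy; rewrite -ltnS.
Qed.

Lemma pr_shift k s (D : {linear C k -> C k.+1}) :
  (forall p (x : C k), pr k.+1 (p + s) (D (pr k p x)) = D (pr k p x)) ->
  forall q (x : C k), pr k.+1 q (D x) = if (s <= q)%N then D (pr k (q - s) x) else 0.
Proof.
move=> Dshift q x; rewrite -{1}(bpr_sum x) !linear_sum.
under eq_bigr => p _ do rewrite -Dshift bpr_orth Dshift.
case: leqP => [sq|qs].
  rewrite -(@sum_ord_if_eq _ k (q - s)%N (fun p => D (pr k p x))); last first.
    by move=> p kp; rewrite bpr_out ?linear0.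
  apply: eq_bigr => p _; congr (if _ then _ else _).
  by apply/eqP/eqP => [->|->]; [rewrite addnK | rewrite subnK].
rewrite big1 // => p _; case: eqP => // qE.
by move: qs; rewrite qE ltnNge leq_addl.
Qed.

Lemma pr_dtot k q (x : C k) : pr k.+1 q (dtot x) =
  (if (2 <= q)%N then bd21 X k (pr k (q - 2) x) else 0) +
  (if (1 <= q)%N then bd10 X k (pr k (q - 1) x) else 0) + bd01 X k (pr k q x).
Proof.
rewrite /dtot !linearD (@pr_shift _ 2) => [|p y]; last by rewrite addn2 bd21_deg.
rewrite (@pr_shift _ 1) => [|p y]; last by rewrite addn1 bd10_deg.
by rewrite (@pr_shift _ 0) ?subn0 // => p y; rewrite addn0 bd01_deg.
Qed.

Lemma pr_piq k q p (x : C k) :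
  pr k p (piq q x) = if (q + p <= k)%N then pr k p x else 0.
Proof.
rewrite /piq big_mkcond linear_sum /=.
rewrite -(@sum_ord_if_eq _ k p (fun i => if (q + i <= k)%N then pr k i x else 0)).
  apply: eq_bigr => i _; rewrite (fun_if (pr k p)) linear0 bpr_orth (eq_sym p).
  by case: (_ + _ <= _)%N; case: eqP.
by move=> i ki; rewrite bpr_out //; case: ifP.
Qed.

Lemma pr_piq_eq0 k q p (x : C k) : piq q x = 0 -> (q + p <= k)%N -> pr k p x = 0.
Proof. by move=> /(congr1 (pr k p)) + qpk; rewrite pr_piq qpk linear0. Qed.

Lemma pr_sum_C3 (x : C 3) : x = pr 3 0 x + pr 3 1 x + pr 3 2 x + pr 3 3 x.
Proof. by rewrite -{1}(bpr_sum x) !big_ord_recr big_ord0 /= add0r. Qed.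

Lemma piq2_C2 (x : C 2) : piq 2 x = pr 2 0 x.
Proof. by apply: pr_ext => -[|[|[|//]]] _; rewrite pr_piq bpr_orth. Qed.

Lemma piq1_C2 (x : C 2) : piq 1 x = pr 2 0 x + pr 2 1 x.
Proof.
by apply: pr_ext => -[|[|[|//]]] _; rewrite pr_piq linearD !bpr_orth ?addr0 ?add0r.
Qed.

Lemma inC2_C2 (x : C 2) : inC 2 x <-> pr 2 0 x = 0 /\ pr 2 1 x = 0.
Proof.
split=> [x2|[x0 x1]]; first by split; apply: (inC_pr_neq x2).
by apply: pr_ext => -[|[|[|//]]] _; rewrite bpr_orth //= ?x0 ?x1.
Qed.

Lemma BN_zero j k : BN j (0 : C k.+1).
Proof.
exists 0; split; last exact: linear0.
by rewrite /NqIn; case: ifP => // _; split; rewrite /inC ?linear0.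
Qed.

Lemma BN_inC j k (x : C k.+1) :
  (j <= k)%N -> BN j x -> exists2 y : C k, inC (k - j) y & dtot y = x.
Proof. by move=> jk [y [+ <-]]; rewrite /NqIn jk => -[yC _ _]; exists y. Qed.

Lemma subspace_Zc k : is_subspace (@Zc R X k).
Proof. exact: subspace_ker. Qed.

Lemma subspace_Bc k : is_subspace (@Bc R X k).
Proof.
split; first by exists 0; rewrite linear0.
by move=> a _ _ [x <-] [y <-]; exists (a *: x + y); rewrite linearP.
Qed.

Lemma Bc_Zc k (x : C k.+2) : Bc x -> Zc x.
Proof. by move=> [y <-]; apply: bdd. Qed.

Lemma rho_rep_C2 (xi eta : C 2) :
  pr 2 1 xi = pr 2 1 eta -> rho_rep xi eta = pr 3 3 (dtot eta).
Proof.
move=> xiE; rewrite /rho_rep pr_dtot /= xiE.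
by rewrite (bpr_out eta (_ : 2 < 3)%N) ?linear0 ?addr0.
Qed.

Lemma Bc_onto_B0 : maps_onto (@Bc R X 1) (@B0 R X 1) (pr 2 0).
Proof.
split=> [_ [y <-]|_ [y [y0 <-]]].
  by exists (pr 1 0 y); split; [exact: pr_idem | rewrite pr_dtot /= !add0r].
by exists (dtot y); [exists y | rewrite pr_dtot /= !add0r y0].
Qed.

Lemma Bc_onto_calB :
  maps_onto (fun b => Bc b /\ pr 2 0 b = 0) (fun x => calB 1 x /\ inC 1 x) (pr 2 1).
Proof.
split=> [_ [[y <-] y0]|z [[y zE] z1]].
  by split; [exists y; rewrite piq1_C2 y0 add0r | exact: pr_idem].
have [zE0 zE1] := (congr1 (pr 2 0) zE, congr1 (pr 2 1) zE).
rewrite !pr_piq /= in zE0 zE1.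
exists (dtot y); last by rewrite -zE1 z1.
by split; [exists y | rewrite -zE0 (inC_pr_neq z1)].
Qed.

Lemma Bc_onto_C20 :
  maps_onto (fun b => (@Bc R X 1 b /\ pr 2 0 b = 0) /\ pr 2 1 b = 0)
    (fun x => Bc x /\ inC 2 x) idfun.
Proof.
split=> [b [[Bb b0] b1]|x [Bx /inC2_C2 [x0 x1]]]; last by exists x.
by split=> //; apply/inC2_C2.
Qed.

Lemma Zc_onto_calZ : maps_onto (@Zc R X 2) (@calZ R X 2 2) (pr 2 0).
Proof.
split=> [z zc|_ [eta [Meta deta0 ->]]].
  exists z; split; last by rewrite piq2_C2.
    by move=> i _; rewrite zc linear0; apply: BN_zero.
  by rewrite zc linear0.
(* eta in M^2 supplies N-coboundaries equal to the C^{2,1}- and C^{3,0}-components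
   of d eta, the only ones left by piq 2 (d eta) = 0 *)
have [y1 y1C11 y1E] := BN_inC (isT : (1 <= 2)%N) (Meta 2%N isT).
have [y2 y2C20 y2E] := BN_inC (isT : (0 <= 2)%N) (Meta 3%N isT).
exists (eta - y2 - y1).
  rewrite /Zc !linearB /= y1E y2E {1}(pr_sum_C3 (dtot eta)).
  rewrite (pr_piq_eq0 (p := 0) deta0) // (pr_piq_eq0 (p := 1) deta0) //.
  by rewrite !add0r addrK subrr.
by rewrite piq2_C2 !linearB (inC_pr_neq y2C20) // (inC_pr_neq y1C11) // !subr0.
Qed.

Lemma Zc_onto_ker_rho :
  maps_onto (fun z => Zc z /\ pr 2 0 z = 0) (@ker_rho R X 2) (pr 2 1).
Proof.
split=> [z [zc z0]|z2 [[_ _ z2C11] [eta [etaE deta0 rhoBN]]]].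
  have piq1z : piq 1 z = pr 2 1 z by rewrite piq1_C2 z0 add0r.
  have dz : piq 1 (dtot z) = 0 by rewrite zc linear0.
  split; first by split=> //; [exists z | exact: pr_idem].
  exists z; split=> //.
  by rewrite rho_rep_C2 ?pr_idem // zc linear0; apply: BN_zero.
have eta0 : pr 2 0 eta = 0.
  by rewrite -(inC_pr_neq z2C11 (_ : 0 != 2 - 1)%N) // -etaE pr_piq.
have eta1 : pr 2 1 eta = z2 by rewrite -[RHS]z2C11 -etaE pr_piq.
(* varrho_2 z2 = 0 supplies an N-coboundary equal to the C^{3,0}-component of d eta,
   the only one left by piq 1 (d eta) = 0 *)
have [y yC20 yE] := BN_inC (isT : (0 <= 2)%N) rhoBN.
rewrite rho_rep_C2 in yE; last by rewrite z2C11.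
exists (eta - y); last by rewrite linearB eta1 (inC_pr_neq yC20) // subr0.
split; last by rewrite linearB eta0 (inC_pr_neq yC20) // subr0.
rewrite /Zc linearB /= yE {1}(pr_sum_C3 (dtot eta)).
rewrite (pr_piq_eq0 (p := 0) deta0) // (pr_piq_eq0 (p := 1) deta0) //.
by rewrite (pr_piq_eq0 (p := 2) deta0) // !add0r subrr.
Qed.

Lemma Zc_onto_ZN0 :
  maps_onto (fun z => (@Zc R X 2 z /\ pr 2 0 z = 0) /\ pr 2 1 z = 0)
    (@ZN0 R X 2) idfun.
Proof.
split=> [z [[zc z0] z1]|z [+ zc]]; last first.
  by rewrite /NqIn /= => -[/inC2_C2 [z0 z1] _ _]; exists z.
have z2 : inC 2 z by apply/inC2_C2.
split=> //; rewrite /NqIn /=; split=> //.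
  by have := congr1 (pr 3 2) zc; rewrite pr_dtot /= z0 z1 z2 !linear0 !add0r.
by rewrite -z2 -bd21_deg bpr_out.
Qed.

End Bicomplex.

Theorem corollary5p6 (R : fieldType) (X : bicomplex R) :
  (* B^2 ~= (B^2 /\ C^{2,0}) (+) (\mathcal{B}^2_1 /\ C^{1,1}) (+) B^2(C^{0,.}, d01) *)
  subq_iso3 (@Bc R X 1) (@zerop R (bC X 2))
    (fun x => Bc x /\ inC 2 x) (@zerop R (bC X 2))
    (fun x => calB 1 x /\ inC 1 x) (@zerop R (bC X 2))
    (@B0 R X 1) (@zerop R (bC X 2)) /\
  (* Z^2 ~= Z^2(N_0) (+) ker(varrho_2) (+) \mathcal{Z}^2_2 *)
  subq_iso3 (@Zc R X 2) (@zerop R (bC X 2))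
    (@ZN0 R X 2) (@zerop R (bC X 2))
    (@ker_rho R X 2) (@zerop R (bC X 2))
    (fun x => @calZ R X 2 2 x) (@zerop R (bC X 2)) /\
  (* H^2 = Z^2/B^2 ~= Z^2(N_0)/(B^2 /\ C^{2,0}) (+) ker(varrho_2)/(\mathcal{B}^2_1 /\ C^{1,1})
                       (+) \mathcal{Z}^2_2 / B^2(C^{0,.}, d01) *)
  subq_iso3 (@Zc R X 2) (@Bc R X 1)
    (@ZN0 R X 2) (fun x => Bc x /\ inC 2 x)
    (@ker_rho R X 2) (fun x => calB 1 x /\ inC 1 x)
    (fun x => @calZ R X 2 2 x) (@B0 R X 1).
Proof.
split; [|split].
- apply: (subspace_iso3_of_filtration (subspace_Bc X 1) (Bc_onto_B0 X)
    (Bc_onto_calB X) (Bc_onto_C20 X)).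
  by move=> z _.
- apply: (subspace_iso3_of_filtration (subspace_Zc X 2) (Zc_onto_calZ X)
    (Zc_onto_ker_rho X) (Zc_onto_ZN0 X)).
  by move=> z _.
- apply: (subq_iso3_of_filtration (subspace_Zc X 2) (subspace_Bc X 1) (@Bc_Zc R X 0)
    (Zc_onto_calZ X) (Bc_onto_B0 X) (Zc_onto_ker_rho X) (Bc_onto_calB X)
    (Zc_onto_ZN0 X) (Bc_onto_C20 X)).
  by move=> z _ /= ->; case: (subspace_Bc X 1).
Qed.
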